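(* Let $K$ be a field of characteristic $\neq 2$ and let $\mathcal C$ be a 2-dimensional EACP over $K$ (natural basis $\{h,r\}$) with $\mathcal C^2\neq0$. Then $\mathcal C$ is isomorphic to exactly one of the following algebras with basis $\{h,r\}$: $\mathcal C_1$: $rh=hr=h$, $h^2=r^2=0$; $\mathcal C_2$: $rh=hr=\frac12(h+r)$, $h^2=r^2=0$; and $\mathcal C_1$, $\mathcal C_2$ are not isomorphic.
   Context: An EACP over a field $K$ (characteristic $\neq 2$) is a $K$-algebra $\mathcal C$ with a basis $\{h_1,\dots,h_n,r\}$ (called a natural basis) whose multiplication is determined by bilinearity from $$h_ir=rh_i=\tfrac12\Big(\sum_{j=1}^n a_{ij}h_j+b_ir\Big),\qquad h_ih_j=0\ (i,j=1,\dots,n),\qquad rr=0,$$ for some constants $a_{ij},b_i\in K$. For $n=1$ this reads $hr=rh=\frac12(ah+br)$, $h^2=r^2=0$. $\mathcal C^2$ denotes the span of all products $xy$, $x,y\in\mathcal C$. Isomorphism means algebra isomorphism. *)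

(* A 2-dimensional algebra over K is modelled on the
   coordinate space 'rV[K]_2, the natural basis being h = e_0, r = e_1;
   its multiplication is the bilinear extension of a multiplication table
   on basis vectors. *)
From HB Require Import structures.
From mathcomp Require Import all_boot all_order all_algebra.
Set Implicit Arguments. Unset Strict Implicit. Unset Printing Implicit Defensive.
Import GRing.Theory.
Local Open Scope ring_scope.

Section TwoDim.
Variable K : fieldType.

Definition bh : 'rV[K]_2 := delta_mx 0 0.
Definition br : 'rV[K]_2 := delta_mx 0 1.

Definition mul_of_table (t : 'I_2 -> 'I_2 -> 'rV[K]_2) (x y : 'rV[K]_2) : 'rV[K]_2 :=
  \sum_(i < 2) \sum_(j < 2) (x 0 i * y 0 j) *: t i j.

Definition sym_table (v : 'rV[K]_2) (i j : 'I_2) : 'rV[K]_2 :=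
  if i != j then v else 0.

(* The 2-dimensional EACP (n = 1): hr = rh = 1/2 (a h + b r), h^2 = r^2 = 0 *)
Definition eacp2_mul (a b : K) : 'rV[K]_2 -> 'rV[K]_2 -> 'rV[K]_2 :=
  mul_of_table (sym_table (2%:R^-1 *: (a *: bh + b *: br))).

Definition C1_mul : 'rV[K]_2 -> 'rV[K]_2 -> 'rV[K]_2 :=
  mul_of_table (sym_table bh).

Definition C2_mul : 'rV[K]_2 -> 'rV[K]_2 -> 'rV[K]_2 :=
  mul_of_table (sym_table (2%:R^-1 *: (bh + br))).

(* C^2 <> 0 : the span of all products is nonzero, i.e. some product is nonzero *)
Definition square_nonzero (m : 'rV[K]_2 -> 'rV[K]_2 -> 'rV[K]_2) : Prop :=
  exists x y, m x y != 0.

Definition alg_iso (m1 m2 : 'rV[K]_2 -> 'rV[K]_2 -> 'rV[K]_2)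
    (f : 'rV[K]_2 -> 'rV[K]_2) : Prop :=
  [/\ (forall (c : K) x y, f (c *: x + y) = c *: f x + f y),
      bijective f &
      (forall x y, f (m1 x y) = m2 (f x) (f y))].

Definition alg_isomorphic (m1 m2 : 'rV[K]_2 -> 'rV[K]_2 -> 'rV[K]_2) : Prop :=
  exists f, alg_iso m1 m2 f.

End TwoDim.

(* Every product in an algebra with table hh = rr = 0, hr = rh = v is a
   multiple of v by the symmetric form x_h y_r + x_r y_h.  Hence a linear
   bijection that rescales this form by k and sends v to k w is an isomorphism
   onto the table with hr = rh = w; coordinate rescalings and the swap of h
   and r provide such maps, taking the EACP to C_1 when one of a, b vanishes
   and to C_2 otherwise.  C_1 and C_2 are distinguished by the invariant
   C^2 C^2 = 0, which holds in C_1 but fails in C_2 since 2 != 0. *)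
From HB Require Import structures.
From mathcomp Require Import all_boot all_order all_algebra.
From mathcomp Require Import ring.
Import GRing.Theory.
Local Open Scope ring_scope.

Section TwoDimAlgebras.
Context {K : fieldType}.
Implicit Types (m : 'rV[K]_2 -> 'rV[K]_2 -> 'rV[K]_2) (x y v w : 'rV[K]_2).

Lemma ord2P (j : 'I_2) : j = 0 \/ j = 1.
Proof. by case: j => [[|[|//]]] lt_j2; [left | right]; apply: val_inj. Qed.

Lemma linear_map0 {f : 'rV[K]_2 -> 'rV[K]_2} :
  (forall (c : K) x y, f (c *: x + y) = c *: f x + f y) -> f 0 = 0.
Proof.
move=> f_lin; have := f_lin 1 0 0; rewrite addr0 !scale1r.
by move/(congr1 (fun t => t - f 0)); rewrite subrr addrK.
Qed.

Lemma alg_iso_sym {m1 m2 f g} :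
  alg_iso m1 m2 f -> cancel f g -> cancel g f -> alg_iso m2 m1 g.
Proof.
case=> f_lin _ f_mul fK gK; split.
- by move=> c x y; apply: (can_inj fK); rewrite f_lin !gK.
- by exists f.
- by move=> x y; apply: (can_inj fK); rewrite f_mul !gK.
Qed.

Lemma alg_isomorphic_sym {m1 m2} : alg_isomorphic m1 m2 -> alg_isomorphic m2 m1.
Proof.
case=> f f_iso; have [_ [g fK gK] _] := f_iso.
by exists g; apply: alg_iso_sym f_iso fK gK.
Qed.

Lemma alg_isomorphic_trans {m1 m2 m3} :
  alg_isomorphic m1 m2 -> alg_isomorphic m2 m3 -> alg_isomorphic m1 m3.
Proof.
case=> f [f_lin f_bij f_mul] [g [g_lin g_bij g_mul]]; exists (g \o f); split.
- by move=> c x y; rewrite /= f_lin g_lin.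
- exact: bij_comp.
- by move=> x y; rewrite /= f_mul g_mul.
Qed.

Definition square_annihilated m := forall x y z t, m (m x y) (m z t) = 0.

Lemma alg_iso_square_annihilated {m1 m2 f} :
  alg_iso m1 m2 f -> square_annihilated m1 -> square_annihilated m2.
Proof.
case=> f_lin [g fK gK] f_mul ann1 x y z t.
by rewrite -(gK x) -(gK y) -(gK z) -(gK t) -!f_mul ann1 (linear_map0 f_lin).
Qed.

Definition sym_form x y := x 0 0 * y 0 1 + x 0 1 * y 0 0.

Lemma mul_sym_tableE v x y :
  mul_of_table (sym_table v) x y = sym_form x y *: v.
Proof.
rewrite /mul_of_table !big_ord_recl !big_ord0 /sym_table /=.
rewrite !scaler0 !add0r !addr0 scalerDl.
by have -> : lift ord0 ord0 = 1 :> 'I_2 by apply: val_inj.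
Qed.

Lemma sym_table_iso (f : 'rV[K]_2 -> 'rV[K]_2) (k : K) v w :
  (forall (c : K) x y, f (c *: x + y) = c *: f x + f y) -> bijective f ->
  (forall x y, sym_form (f x) (f y) = k * sym_form x y) -> f v = k *: w ->
  alg_iso (mul_of_table (sym_table v)) (mul_of_table (sym_table w)) f.
Proof.
move=> f_lin f_bij f_form fv; split=> // x y.
rewrite !mul_sym_tableE -[_ *: v]addr0 f_lin (linear_map0 f_lin) addr0.
by rewrite f_form fv scalerA mulrC.
Qed.

Definition diag_map (c d : K) x : 'rV[K]_2 :=
  \row_j (if j == 0 then c * x 0 0 else d * x 0 1).

Definition swap_map x : 'rV[K]_2 := \row_j (if j == 0 then x 0 1 else x 0 0).

Lemma diag_map_linear c d (k : K) x y :
  diag_map c d (k *: x + y) = k *: diag_map c d x + diag_map c d y.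
Proof. by apply/rowP => j; rewrite !mxE; case: ifP => _; ring. Qed.

Lemma swap_map_linear (k : K) x y :
  swap_map (k *: x + y) = k *: swap_map x + swap_map y.
Proof. by apply/rowP => j; rewrite !mxE; case: ifP. Qed.

Lemma diag_map_bij c d : c != 0 -> d != 0 -> bijective (diag_map c d).
Proof.
move=> c0 d0; exists (diag_map c^-1 d^-1) => x; apply/rowP => j;
by case: (ord2P j) => ->; rewrite !mxE /= mulrA ?mulVf ?divff ?mul1r.
Qed.

Lemma swap_mapK : involutive swap_map.
Proof. by move=> x; apply/rowP => j; case: (ord2P j) => ->; rewrite !mxE. Qed.

Lemma sym_form_diag_map c d x y :
  sym_form (diag_map c d x) (diag_map c d y) = c * d * sym_form x y.
Proof. by rewrite /sym_form !mxE /=; ring. Qed.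

Lemma sym_form_swap_map x y : sym_form (swap_map x) (swap_map y) = sym_form x y.
Proof. by rewrite /sym_form !mxE /= addrC. Qed.

Lemma diag_map_iso c d v w :
  c != 0 -> d != 0 -> diag_map c d v = (c * d) *: w ->
  alg_iso (mul_of_table (sym_table v)) (mul_of_table (sym_table w)) (diag_map c d).
Proof.
move=> c0 d0; apply: sym_table_iso; first exact: diag_map_linear.
- exact: diag_map_bij.
- exact: sym_form_diag_map.
Qed.

Lemma eacp2_swap_iso (a b : K) :
  alg_iso (eacp2_mul a b) (eacp2_mul b a) swap_map.
Proof.
apply: (@sym_table_iso _ 1); first exact: swap_map_linear.
- exact: inv_bij swap_mapK.
- by move=> x y; rewrite sym_form_swap_map mul1r.
- by rewrite scale1r; apply/rowP => j; case: (ord2P j) => ->; rewrite !mxE /=; ring.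
Qed.

Lemma eacp2_square_nonzero (a b : K) :
  square_nonzero (eacp2_mul a b) -> a != 0 \/ b != 0.
Proof.
case=> x [y]; rewrite /eacp2_mul mul_sym_tableE.
have [-> | ] := eqVneq a 0; last by left.
have [-> | ] := eqVneq b 0; last by right.
by rewrite !scale0r addr0 !scaler0 eqxx.
Qed.

Hypothesis two_neq0 : 2%:R != 0 :> K.

Lemma C1_square_annihilated : square_annihilated (@C1_mul K).
Proof.
move=> x y z t; rewrite /C1_mul !mul_sym_tableE; apply/rowP => j.
by rewrite /sym_form !mxE /= !(mulr1, mulr0, mul0r, addr0).
Qed.

(* In C_2 already (hr)(hr) = (h + r)^2 / 4 = (h + r) / 4 is nonzero. *)
Lemma C2_not_square_annihilated : ~ square_annihilated (@C2_mul K).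
Proof.
move=> ann; have := ann (bh K) (br K) (bh K) (br K).
rewrite /C2_mul !mul_sym_tableE => /rowP /(_ 0); rewrite /sym_form !mxE /=.
rewrite !(mulr1, mulr0, mul0r, addr0, add0r, mul1r) => /eqP; apply/negP.
have -> : 2%:R^-1 * 2%:R^-1 + 2%:R^-1 * 2%:R^-1 = 2%:R^-1 :> K by field.
by rewrite !mulf_neq0 ?invr_eq0.
Qed.

Lemma C1_C2_not_isomorphic : ~ alg_isomorphic (@C1_mul K) (@C2_mul K).
Proof.
case=> f f_iso; apply: C2_not_square_annihilated.
exact: alg_iso_square_annihilated f_iso C1_square_annihilated.
Qed.

Lemma eacp2_a0_isomorphic_C1 (a : K) :
  a != 0 -> alg_isomorphic (eacp2_mul a 0) (@C1_mul K).
Proof.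
move=> a0; exists (diag_map 1 (a / 2%:R)); apply: diag_map_iso.
- exact: oner_neq0.
- by rewrite mulf_neq0 ?invr_eq0.
- by apply/rowP => j; case: (ord2P j) => ->; rewrite !mxE /=; ring.
Qed.

Lemma eacp2_isomorphic_C2 (a b : K) :
  a != 0 -> b != 0 -> alg_isomorphic (eacp2_mul a b) (@C2_mul K).
Proof.
move=> a0 b0; exists (diag_map b a); apply: diag_map_iso => //.
by apply/rowP => j; case: (ord2P j) => ->; rewrite !mxE /=; ring.
Qed.

Lemma eacp2_classification {a b : K} :
  square_nonzero (eacp2_mul a b) ->
  alg_isomorphic (eacp2_mul a b) (@C1_mul K) \/
  alg_isomorphic (eacp2_mul a b) (@C2_mul K).
Proof.
case/eacp2_square_nonzero => [a0 | b0].
  have [-> | b0] := eqVneq b 0; first by left; apply: eacp2_a0_isomorphic_C1.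
  by right; apply: eacp2_isomorphic_C2.
have [-> | a0] := eqVneq a 0; last by right; apply: eacp2_isomorphic_C2.
left; apply: (alg_isomorphic_trans _ (eacp2_a0_isomorphic_C1 _ b0)).
by exists swap_map; apply: eacp2_swap_iso.
Qed.

End TwoDimAlgebras.

Theorem mainTheorem13 (K : fieldType) (hK : 2%N \notin [pchar K]) (a b : K) :
  square_nonzero (eacp2_mul a b) ->
  ((alg_isomorphic (eacp2_mul a b) (@C1_mul K) /\
      ~ alg_isomorphic (eacp2_mul a b) (@C2_mul K)) \/
   (~ alg_isomorphic (eacp2_mul a b) (@C1_mul K) /\
      alg_isomorphic (eacp2_mul a b) (@C2_mul K))) /\
  ~ alg_isomorphic (@C1_mul K) (@C2_mul K).
Proof.
move=> sq_nz; have two_neq0 : 2%:R != 0 :> K.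
  by apply: contra hK => two0; rewrite inE /= two0.
have nC12 := C1_C2_not_isomorphic two_neq0.
have excl m : alg_isomorphic m (@C1_mul K) -> ~ alg_isomorphic m (@C2_mul K).
  by move=> iso1 iso2; apply/nC12/(alg_isomorphic_trans (alg_isomorphic_sym iso1)).
split=> //; case: (eacp2_classification two_neq0 sq_nz) => [iso1 | iso2].
- by left; split=> //; apply: excl.
- by right; split=> // iso1; apply: excl iso1 iso2.
Qed.
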